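(* Let $\underline{t}$ be an increment array of size $s$ for $n$ agents, with period $\pi(\underline{t})$. Then for all $1\le i\le j\le n$, \[C(i,\underline{t})=C(j,\underline{t})\iff \exists\, r\in\mathbb{Z},\ 0\le r\le \frac{(n-i)s}{n\,\pi(\underline{t})}\ :\ j=i+r\cdot\frac{n\,\pi(\underline{t})}{s}.\]
   Context: Agent identifiers are $\{1,\ldots,n\}$, arithmetic on identifiers is modulo $n$ with representatives in $\{1,\ldots,n\}$ (a value $0$ is replaced by $n$). An increment array (IA) of size $s$ ($1\le s\le n$) for $n$ agents is a tuple $\underline{t}=\langle t_0,\ldots,t_{s-1}\rangle$ of non-negative integers with $\sum t_i=n-s$. Cumulative increments: $\varphi_1=0$, $\varphi_i=\sum_{k=0}^{i-2}(t_k+1)$ for $2\le i\le s+1$. The coalition generated from $x$ is $C(x,\underline{t})=\{x\}\cup\bigcup_{i=2}^{s}\{(x+\varphi_i)\bmod n\}$ (residues in $\{1,\ldots,n\}$). The period $\pi(\underline{t})$ is the least $p\in\{1,\ldots,s\}$ such that $\underline{t}$ consists of $s/p$ identical consecutive copies of its prefix $\langle t_0,\ldots,t_{p-1}\rangle$ (in particular $p\mid s$). *)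

From mathcomp Require Import all_boot all_order all_algebra.
Set Implicit Arguments. Unset Strict Implicit. Unset Printing Implicit Defensive.

Definition agent_mod (n x : nat) : nat := if x %% n == 0 then n else x %% n.

Definition is_IA (n : nat) (t : seq nat) : bool :=
  (1 <= size t <= n) && (sumn t == n - size t).

Definition phi (t : seq nat) (i : nat) : nat :=
  \sum_(0 <= k < i.-1) (nth 0 t k).+1.

(* Coalition generated from x : { (x + phi_i) mod n | 1 <= i <= s };
   the i = 1 term is x itself (as x is in {1..n}). *)
Definition coalition (n x : nat) (t : seq nat) : seq nat :=
  [seq agent_mod n (x + phi t i) | i <- iota 1 (size t)].

Definition is_period (t : seq nat) (p : nat) : bool :=
  (0 < p) && (p %| size t) && (t == flatten (nseq (size t %/ p) (take p t))).

(* The period: least p in {1..s} which is a period (s itself always is, if s >= 1). *)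
Definition period (t : seq nat) : nat :=
  head (size t) [seq p <- iota 1 (size t) | is_period t p].

From mathcomp Require Import all_boot all_order all_algebra.
From mathcomp Require Import zify.
Import GRing.Theory Num.Theory.

Set Implicit Arguments.
Unset Strict Implicit.
Unset Printing Implicit Defensive.

(* Extend t periodically and let cumul t k be the sum of the first k extended
   increments plus k, so that C(x) = {x + cumul t k mod n | k} and
   cumul t (k + s) = cumul t k + n.  For i <= j, C(i) = C(j) iff the range of
   cumul t is stable under translation by d = j - i.  Since cumul t is strictly
   increasing from 0, this happens iff cumul t (k + m) = cumul t k + d for some
   m and all k, i.e. iff m is a period of the extended sequence and
   d = cumul t m.  Periods are closed under gcd, so they are the multiples of
   the minimal period pi, and cumul t pi = n pi / s. *)

Definition periodic {T : Type} (f : nat -> T) (m : nat) := forall k, f (k + m) = f k.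

Section Periodic.
Context {T : Type} {f : nat -> T}.

Lemma periodicD a b : periodic f a -> periodic f b -> periodic f (a + b).
Proof. by move=> fa fb k; rewrite addnA fb fa. Qed.

Lemma periodicMn c a : periodic f a -> periodic f (c * a).
Proof.
move=> fa; elim: c => [k|c IHc]; first by rewrite mul0n addn0.
by rewrite mulSn; apply: periodicD.
Qed.

Lemma periodic_addr a b : periodic f (a + b) -> periodic f b -> periodic f a.
Proof. by move=> fab fb k; rewrite -fb -addnA fab. Qed.

Lemma periodic_modn a k : periodic f a -> f k = f (k %% a).
Proof. by move=> fa; rewrite {1}(divn_eq k a) addnC (periodicMn _ fa). Qed.

Lemma periodic_gcdn a b : 0 < a -> periodic f a -> periodic f b ->
  periodic f (gcdn a b).
Proof.
move=> a_gt0 fa fb; case: (egcdnP b a_gt0) => ka kb def_ka _.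
apply: (@periodic_addr _ (kb * b)); last exact: periodicMn.
by rewrite addnC -def_ka; apply: periodicMn.
Qed.

End Periodic.

Definition shift_stable (f : nat -> nat) (d : nat) :=
  forall y, (exists l, y + d = f l) <-> (exists l, y = f l).

Lemma shift_stableP (f : nat -> nat) d :
  {homo f : a b / a < b} -> f 0 = 0 ->
  shift_stable f d <-> exists m, forall k, f (k + m) = f k + d.
Proof.
move=> /leq_mono f_le f0; have f_lt := leqW_mono f_le.
split=> [stable | [m fm] y]; last first.
  have fm0 : f m = d by rewrite -[m]add0n fm f0.
  split=> [[l fl] | [l ->]]; last by exists (l + m); rewrite fm.
  have le_ml : m <= l by rewrite -f_le fm0 -fl leq_addl.
  by exists (l - m); apply/eqP; rewrite -(eqn_add2r d) -fm subnK // fl.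
have [m fm] := (stable 0).2 (ex_intro _ 0 (esym f0)).
exists m; elim=> [|k IHk]; first by rewrite f0.
(* f k.+1 + d and f (k.+1 + m) - d are both values of f, and strict
   monotonicity squeezes f (k.+1 + m) between them. *)
have f_step : f k + d < f (k.+1 + m) by rewrite -IHk f_lt addSn.
have [l fl] := (stable (f k.+1)).2 (ex_intro _ k.+1 erefl).
have le_fl : f (k.+1 + m) <= f l.
  by rewrite f_le addSn -f_lt -fl IHk ltn_add2r f_lt.
have ge_d : d <= f (k.+1 + m) by lia.
have [l' fl'] := (stable (f (k.+1 + m) - d)).1 (ex_intro _ _ (subnK ge_d)).
have le_fl' : f k.+1 <= f l' by rewrite f_le -f_lt -(ltn_add2r d) -fl' subnK.
lia.
Qed.

Lemma eq_agent_mod n x y : (agent_mod n x == agent_mod n y) = (x == y %[mod n]).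
Proof.
rewrite /agent_mod; case: n => [|n].
  by rewrite !modn0; case: (x =P 0) => [->|_]; case: (y =P 0) => [->|_].
have := ltn_pmod x (ltn0Sn n); have := ltn_pmod y (ltn0Sn n).
move: (x %% n.+1) (y %% n.+1) => a b.
by case: (a =P 0); case: (b =P 0) => *; apply/eqP/eqP; lia.
Qed.

(* [incr t] is the periodic extension of [t]; [cumul t k] extends the paper's
   [phi t k.+1] to all k (see [phi_cumul]). *)
Definition incr (t : seq nat) (k : nat) := nth 0 t (k %% size t).

Definition cumul (t : seq nat) (k : nat) := \sum_(0 <= m < k) (incr t m).+1.

Lemma is_IA_size_gt0 n t : is_IA n t -> 0 < size t.
Proof. by case/andP=> /andP[]. Qed.

Lemma is_IA_gt0 n t : is_IA n t -> 0 < n.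
Proof. by case/andP=> /andP[t_gt0 /(leq_trans t_gt0)]. Qed.

Section Cumul.
Variable t : seq nat.

Lemma cumul0 : cumul t 0 = 0.
Proof. by rewrite /cumul big_geq. Qed.

Lemma cumulS k : cumul t k.+1 = cumul t k + (incr t k).+1.
Proof. by rewrite /cumul big_nat_recr. Qed.

Lemma cumul_homo : {homo cumul t : k l / k < l}.
Proof. by apply: homo_ltn ltn_trans _ => k; rewrite cumulS addnS ltnS leq_addr. Qed.

Lemma incr_periodic_size : periodic (incr t) (size t).
Proof. by move=> k; rewrite /incr modnDr. Qed.

Lemma cumulD_periodic m k : periodic (incr t) m ->
  cumul t (k + m) = cumul t k + cumul t m.
Proof.
move=> tm; elim: k => [|k IHk]; first by rewrite cumul0.
by rewrite addSn !cumulS IHk tm addnAC.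
Qed.

Lemma cumulM_periodic c m : periodic (incr t) m -> cumul t (c * m) = c * cumul t m.
Proof.
move=> tm; elim: c => [|c IHc]; first by rewrite !mul0n cumul0.
by rewrite !mulSn addnC cumulD_periodic // IHc addnC.
Qed.

Lemma periodic_cumul_translation m d :
  (forall k, cumul t (k + m) = cumul t k + d) -> periodic (incr t) m.
Proof. by move=> tmd k; have := tmd k.+1; rewrite addSn !cumulS tmd; lia. Qed.

Lemma phi_cumul i : i <= size t -> phi t i = cumul t i.-1.
Proof.
move=> le_it; apply: eq_big_nat => m /andP[_ lt_mi].
by rewrite /incr modn_small //; lia.
Qed.

Variable n : nat.
Hypothesis tIA : is_IA n t.

Lemma cumul_size : cumul t (size t) = n.
Proof.
case/andP: tIA => /andP[_ le_tn] /eqP sum_t.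
rewrite /cumul (eq_big_nat _ _ (F2 := fun m => nth 0 t m + 1)); last first.
  by move=> m /andP[_ lt_mt]; rewrite /incr modn_small // addn1.
rewrite big_split /= sum_nat_const_nat.
have -> : \sum_(0 <= m < size t) nth 0 t m = sumn t by rewrite sumnE [RHS](big_nth 0).
by rewrite sum_t; lia.
Qed.

Lemma cumulDM_size c k : cumul t (k + c * size t) = cumul t k + c * n.
Proof.
have t_s := incr_periodic_size.
by rewrite cumulD_periodic ?cumulM_periodic ?cumul_size //; apply: periodicMn.
Qed.

Lemma cumul_modn k : cumul t k %% n = cumul t (k %% size t).
Proof.
rewrite {1}(divn_eq k (size t)) addnC cumulDM_size addnC modnMDl modn_small //.
by rewrite -[X in _ < X]cumul_size cumul_homo // ltn_pmod // (is_IA_size_gt0 tIA).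
Qed.

End Cumul.

Lemma mem_coalition n t x z : is_IA n t ->
  (z \in coalition n x t) <-> exists k, z = agent_mod n (x + cumul t k).
Proof.
move=> tIA; have t_gt0 := is_IA_size_gt0 tIA.
split=> [/mapP[i] | [k ->]].
  by rewrite mem_iota => /andP[i_gt0 lt_it] ->; exists i.-1; rewrite phi_cumul //; lia.
apply/mapP; exists (k %% size t).+1; first by rewrite mem_iota add1n !ltnS ltn_pmod.
rewrite phi_cumul ?ltn_pmod //=; apply/eqP.
by rewrite eq_agent_mod -(cumul_modn tIA) modnDmr.
Qed.

Lemma agent_mod_in_coalition n t x y : is_IA n t ->
  (agent_mod n (x + y) \in coalition n x t) <-> exists k, y = cumul t k.
Proof.
move=> tIA; rewrite mem_coalition //; split=> [[k] | [k ->]]; last by exists k.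
move/eqP; rewrite eq_agent_mod eqn_modDl => /eqP y_mod.
exists (k %% size t + y %/ n * size t).
by rewrite (cumulDM_size tIA) -(cumul_modn tIA) -y_mod addnC -divn_eq.
Qed.

Lemma coalition_eq_shift_stable n t i j : is_IA n t -> i <= j <= n ->
  coalition n i t =i coalition n j t <-> shift_stable (cumul t) (j - i).
Proof.
move=> tIA /andP[le_ij le_jn].
have [d def_j] : exists d, j = i + d by exists (j - i); rewrite subnKC.
rewrite def_j addKn in le_jn *.
split=> [eq_ij y | stable z].
  rewrite -(agent_mod_in_coalition i _ tIA) -(agent_mod_in_coalition (i + d) _ tIA).
  by rewrite (addnC y) addnA eq_ij.
apply/idP/idP => /(mem_coalition _ _ tIA) [k ->].
  have -> : agent_mod n (i + cumul t k) = agent_mod n (i + d + (cumul t k + n - d)).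
    by apply/eqP; rewrite eq_agent_mod -addnA subnKC ?addnA ?modnDr //; lia.
  apply/(agent_mod_in_coalition _ _ tIA)/stable; exists (k + 1 * size t).
  by rewrite (cumulDM_size tIA) subnK ?mul1n //; lia.
rewrite -addnA (addnC d).
by apply/(agent_mod_in_coalition _ _ tIA)/stable; exists k.
Qed.

Lemma nth_flatten_nseq (T : Type) (x0 : T) (u : seq T) c k : k < c * size u ->
  nth x0 (flatten (nseq c u)) k = nth x0 u (k %% size u).
Proof.
elim: c k => [|c IHc] k; first by rewrite mul0n.
rewrite mulSn /= nth_cat => lt_k; case: ltnP => [lt_ku | le_uk]; first by rewrite modn_small.
rewrite IHc; last by rewrite ltn_subLR.
by rewrite -[in RHS](subnK le_uk) modnDr.
Qed.

Lemma is_periodP t p : 0 < size t ->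
  is_period t p <-> [/\ 0 < p, p %| size t & periodic (incr t) p].
Proof.
move=> t_gt0; rewrite /is_period.
have take_p q : q %| size t -> size (take q t) = q.
  by move=> q_dvd; rewrite size_take_min; apply/minn_idPl/dvdn_leq.
have flat_nth q k : 0 < q -> q %| size t -> k < size t ->
    nth 0 (flatten (nseq (size t %/ q) (take q t))) k = nth 0 t (k %% q).
  move=> q_gt0 q_dvd lt_kt; rewrite nth_flatten_nseq take_p ?divnK //.
  by rewrite nth_take ?ltn_pmod.
split=> [/andP[/andP[p_gt0 p_dvd] /eqP def_t] | [p_gt0 p_dvd t_p]].
  have incr_mod k : incr t k = nth 0 t (k %% p).
    by rewrite /incr {1}def_t flat_nth ?ltn_pmod // modn_dvdm.
  by split=> // k; rewrite !incr_mod modnDr.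
rewrite p_gt0 p_dvd; apply/eqP/(@eq_from_nth _ 0) => [|k lt_kt].
  by rewrite size_flatten /shape map_nseq sumn_nseq take_p // mulnC divnK.
rewrite flat_nth //; have := periodic_modn k t_p.
rewrite /incr (modn_small lt_kt) modn_small //.
exact: leq_trans (ltn_pmod _ p_gt0) (dvdn_leq t_gt0 p_dvd).
Qed.

Lemma head_filter_iota (P : pred nat) d a b q : a <= q < a + b -> P q ->
  P (head d [seq p <- iota a b | P p]) /\ head d [seq p <- iota a b | P p] <= q.
Proof.
elim: b a => [|b IHb] a; first by rewrite addn0; lia.
move=> q_in Pq /=; case: ifP => [Pa | /negbT nPa] /=; first by split => //; lia.
apply: IHb => //; case: (eqVneq q a) => [def_q | ]; last lia.
by rewrite -def_q Pq in nPa.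
Qed.

Section Period.
Variable t : seq nat.
Hypothesis t_gt0 : 0 < size t.

Lemma is_period_period : is_period t (period t).
Proof.
have size_period : is_period t (size t).
  by rewrite /is_period t_gt0 dvdnn divnn t_gt0 take_size /= cats0.
have size_in : 1 <= size t < 1 + size t by rewrite t_gt0 add1n ltnSn.
by have [] := head_filter_iota (size t) size_in size_period.
Qed.

Lemma period_min q : is_period t q -> period t <= q.
Proof.
move=> q_period; have /is_periodP[//|q_gt0 q_dvd _] := q_period.
have q_in : 1 <= q < 1 + size t by rewrite q_gt0 add1n ltnS dvdn_leq.
by have [] := head_filter_iota (size t) q_in q_period.
Qed.

Lemma incr_periodic_period : periodic (incr t) (period t).
Proof. by have /is_periodP[] := is_period_period. Qed.

Lemma period_gt0 : 0 < period t.
Proof. by have /is_periodP[] := is_period_period. Qed.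

Lemma period_dvdn m : periodic (incr t) m -> period t %| m.
Proof.
move=> t_m; have /is_periodP[//|p_gt0 p_dvd t_p] := is_period_period.
set q := gcdn (period t) m.
have q_period : is_period t q.
  apply/is_periodP => //; split; first by rewrite gcdn_gt0 p_gt0.
    exact: dvdn_trans (dvdn_gcdl _ _) p_dvd.
  exact: periodic_gcdn.
have /eqP <- : q == period t.
  by rewrite eqn_leq period_min // dvdn_leq ?dvdn_gcdl.
exact: dvdn_gcdr.
Qed.

End Period.

Lemma cumul_translationP t d : 0 < size t ->
  (exists m, forall k, cumul t (k + m) = cumul t k + d) <->
  exists r, d = r * cumul t (period t).
Proof.
move=> t_gt0; have t_p := incr_periodic_period t_gt0.
split=> [[m tmd] | [r ->]].
  have /dvdnP[r def_m] := period_dvdn t_gt0 (periodic_cumul_translation tmd).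
  by exists r; have := tmd 0; rewrite cumul0 !add0n def_m cumulM_periodic.
exists (r * period t) => k.
by rewrite cumulD_periodic ?cumulM_periodic //; apply: periodicMn.
Qed.

Lemma cumul_period_size n t : is_IA n t ->
  cumul t (period t) * size t = n * period t.
Proof.
move=> tIA; have t_gt0 := is_IA_size_gt0 tIA.
have p_dvd : period t %| size t by have /is_periodP[] := is_period_period t_gt0.
rewrite -(cumul_size tIA) -(divnK p_dvd).
rewrite cumulM_periodic; last exact: incr_periodic_period.
by rewrite mulnA (mulnC (cumul _ _)).
Qed.

Lemma coalition_eqP n t i j : is_IA n t -> i <= j <= n ->
  coalition n i t =i coalition n j t <-> exists r, j = i + r * cumul t (period t).
Proof.
move=> tIA ij_in; have /andP[le_ij _] := ij_in.
rewrite coalition_eq_shift_stable // shift_stableP ?cumul0 //; last exact: cumul_homo.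
rewrite cumul_translationP ?(is_IA_size_gt0 tIA) //.
by split=> -[r def_r]; exists r; lia.
Qed.

Lemma progression_ratP n s p g i j : g * s = n * p -> 0 < s -> 0 < n * p -> j <= n ->
  (exists r, j = i + r * g) <->
  exists r : int, (0 <= r)%R /\
    (r%:~R <= ((n - i) * s)%:R / (n * p)%:R :> rat)%R /\
    (j%:R = i%:R + r%:~R * ((n * p)%:R / s%:R) :> rat)%R.
Proof.
move=> gs s_gt0 np_gt0 le_jn.
have step : ((n * p)%:R / s%:R = g%:R :> rat)%R.
  by rewrite -gs natrM mulfK // pnatr_eq0 -lt0n.
rewrite step; split=> [[r def_j] | [r [r_ge0 [_ def_j]]]]; last first.
  case: r r_ge0 def_j => // r _; rewrite -pmulrn -natrM -natrD => /eqP.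
  by rewrite eqr_nat => /eqP; exists r.
exists r; rewrite -pmulrn; do !split => //; last by rewrite def_j natrD natrM.
by rewrite ler_pdivlMr ?ltr0n // -natrM ler_nat -gs mulnA leq_mul2r; lia.
Qed.

Theorem theorem6 (n : nat) (t : seq nat) :
  is_IA n t ->
  forall i j : nat, 1 <= i -> i <= j -> j <= n ->
  (coalition n i t =i coalition n j t <->
   exists r : int,
     (0 <= r)%R /\
     (r%:~R <= ((n - i) * size t)%:R / (n * period t)%:R :> rat)%R /\
     (j%:R = i%:R + r%:~R * ((n * period t)%:R / (size t)%:R) :> rat)%R).
Proof.
(* The argument does not need [1 <= i]. *)
move=> tIA i j _ le_ij le_jn.
have t_gt0 := is_IA_size_gt0 tIA.
have np_gt0 : 0 < n * period t by rewrite muln_gt0 (is_IA_gt0 tIA) period_gt0.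
rewrite coalition_eqP ?le_ij //.
exact: progression_ratP (cumul_period_size tIA) t_gt0 np_gt0 le_jn.
Qed.
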